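(* If $m\ge 38$ is even and $m=3t$ for some positive integer $t$, then $\lambda(L_m)<\lambda(Y_m)$.
   Context: $\lambda(\cdot)$ denotes the largest adjacency eigenvalue. For even $m$, $L_m$ is obtained from a 5-cycle $u_1u_2u_3u_4u_5$ by adding $\frac{m-6}{2}$ new vertices each adjacent exactly to $u_1$ and $u_3$, and one new vertex adjacent only to $u_1$ (equivalently, $SK_{2,\frac{m-2}{2}}$, i.e. $K_{2,\frac{m-2}{2}}$ with one edge subdivided, with a pendant edge attached at a vertex of maximum degree). When $\frac{m-3}{3}$ is a positive integer, $Y_m$ is obtained from $C_5$ by replacing one vertex by an independent set $I$ of $\frac{m-3}{3}$ vertices each adjacent to both neighbours of the replaced vertex, then adding a new vertex adjacent to all vertices of $I$. *)

From mathcomp Require Import all_boot all_order all_algebra.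
From mathcomp.real_closed Require Import polyrcf.
Set Implicit Arguments. Unset Strict Implicit. Unset Printing Implicit Defensive.
Import Order.TTheory GRing.Theory Num.Theory.
Local Open Scope ring_scope.

Definition adj_mx (R : nzRingType) (n : nat) (e : nat -> nat -> bool) : 'M[R]_n :=
  \matrix_(i < n, j < n) ((e i j || e j i) : nat)%:R.

(* Largest adjacency eigenvalue: the largest real root of the characteristic
   polynomial (rootsR lists the real roots in increasing order). *)
Definition lambda (R : rcfType) (n : nat) (A : 'M[R]_n) : R :=
  last 0 (rootsR (char_poly A)).

(* L_m : 5-cycle u1..u5 = vertices 0..4; a = (m-6)/2 vertices 5..4+a adjacent
   to u1 (=0) and u3 (=2); one pendant vertex 5+a adjacent to u1. *)
Definition L_edge (m : nat) (i j : nat) : bool :=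
  let a := (m - 6)./2 in
  [|| (i == 0%N) && (j == 1%N), (i == 1%N) && (j == 2%N), (i == 2%N) && (j == 3%N),
      (i == 3%N) && (j == 4%N), (i == 0%N) && (j == 4%N),
      ((i == 0%N) || (i == 2%N)) && (5 <= j < 5 + a)%N
    | (i == 0%N) && (j == 5 + a)%N].

Definition L_order (m : nat) : nat := ((m - 6)./2 + 6)%N.

Definition L_mx (R : rcfType) (m : nat) : 'M[R]_(L_order m) := @adj_mx R (L_order m) (L_edge m).

(* Y_m : C5 = u1..u5 with u1 replaced by an independent set I of k = (m-3)/3
   vertices adjacent to u2 and u5; u2,u3,u4,u5 = vertices 0..3, I = vertices
   4..3+k, and a new vertex 4+k adjacent to all of I. *)
Definition Y_edge (m : nat) (i j : nat) : bool :=
  let k := ((m - 3) %/ 3)%N in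
  [|| (i == 0%N) && (j == 1%N), (i == 1%N) && (j == 2%N), (i == 2%N) && (j == 3%N),
      ((i == 0%N) || (i == 3%N)) && (4 <= j < 4 + k)%N
    | (4 <= i < 4 + k)%N && (j == 4 + k)%N].

Definition Y_order (m : nat) : nat := ((m - 3) %/ 3 + 5)%N.

Definition Y_mx (R : rcfType) (m : nat) : 'M[R]_(Y_order m) := @adj_mx R (Y_order m) (Y_edge m).

From mathcomp Require Import all_boot all_order all_algebra.
From mathcomp.real_closed Require Import polyrcf.
From mathcomp Require Import zify ring lra.
Import Order.TTheory GRing.Theory Num.Theory.
Local Open Scope ring_scope.

(* Both spectral radii are read off from equitable partitions.  Writing m = 6s,
   a = 3s - 3 and k = 2s - 1, every nonzero eigenvalue of L_m is a root of the
   sextic L_factor a, while every root mu > 1 of the quartic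
   Y_factor k x = (x^2 - x - 1)(x^2 - k) - 2kx(x - 1) is an eigenvalue of Y_m,
   with an explicit eigenvector that is constant on the classes of the partition.
   The identity L_factor a = (x^2 + x - 1) Y_factor k + (s - 1)(x^2 - 2x - 1)
   makes Y_factor k negative at max(lambda(L_m), 3); since it is positive for
   large x, it has a root beyond that point, and lambda(Y_m) is at least that
   root. *)

Lemma sorted_le_last d (T : porderType d) (x0 x : T) (s : seq T) :
  sorted <%O s -> x \in s -> (x <= last x0 s)%O.
Proof.
move=> s_sorted xs; have ilt : (index x s < size s)%N by rewrite index_mem.
have s_gt0 : (0 < size s)%N := leq_ltn_trans (leq0n _) ilt.
by rewrite -nth_last -(nth_index x0 xs) lt_sorted_leq_nth ?inE ?ltn_predL // -ltnS prednK.
Qed.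

Section Spectrum.
Set Implicit Arguments. Unset Strict Implicit.
Variable R : rcfType.

Lemma root_le_lambda n (A : 'M[R]_n) x : root (char_poly A) x -> x <= lambda A.
Proof.
move=> Ax; apply: sorted_le_last; first exact: sorted_roots.
by rewrite -roots_on_rootsR ?Ax ?monic_neq0 ?char_poly_monic.
Qed.

Lemma lambda_root n (A : 'M[R]_n) : lambda A != 0 -> root (char_poly A) (lambda A).
Proof.
rewrite /lambda; have := mem_last 0 (rootsR (char_poly A)).
rewrite inE => /predU1P[-> /eqP //|A_root _].
by move: A_root; rewrite -roots_on_rootsR ?monic_neq0 ?char_poly_monic // => /andP[].
Qed.

Definition rnth n (v : 'rV[R]_n) (i : nat) : R :=
  if insub i is Some o then v 0 o else 0.

Lemma rnth_ord n (v : 'rV[R]_n) (i : 'I_n) : rnth v i = v 0 i.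
Proof. by rewrite /rnth valK. Qed.

Lemma rnth_row n (f : nat -> R) i : (i < n)%N -> rnth (\row_(j < n) f j) i = f i.
Proof. by move=> lt_in; rewrite (rnth_ord _ (Ordinal lt_in)) mxE. Qed.

Lemma rnth_eq0 n (v : 'rV[R]_n) : (forall i, (i < n)%N -> rnth v i = 0) -> v = 0.
Proof. by move=> v0; apply/rowP => i; rewrite mxE -rnth_ord v0. Qed.

Lemma mul_adj_mxE n e (v : 'rV[R]_n) (j : 'I_n) :
  (v *m adj_mx R n e) 0 j = \sum_(0 <= i < n) rnth v i * (e i j || e j i)%:R.
Proof. by rewrite mxE big_mkord; apply: eq_bigr => i _; rewrite rnth_ord mxE. Qed.

Lemma eigen_adj_sum n e (v : 'rV[R]_n) x j : v *m adj_mx R n e = x *: v -> (j < n)%N ->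
  \sum_(0 <= i < n) rnth v i * (e i j || e j i)%:R = x * rnth v j.
Proof.
move=> v_eigen lt_jn; have := congr1 (fun u : 'rV_n => u 0 (Ordinal lt_jn)) v_eigen.
by rewrite /= mul_adj_mxE mxE -(rnth_ord v (Ordinal lt_jn)).
Qed.

Lemma row_eigen_adj n e (f : nat -> R) x :
  (forall j, (j < n)%N -> \sum_(0 <= i < n) f i * (e i j || e j i)%:R = x * f j) ->
  (\row_(j < n) f j) *m adj_mx R n e = x *: \row_(j < n) f j.
Proof.
move=> f_eigen; apply/rowP => j; rewrite mul_adj_mxE !mxE -f_eigen //.
by apply: eq_big_nat => i /andP[_ lt_in]; rewrite rnth_row.
Qed.

Lemma sum_mul_indicator (c : bool) (f : nat -> R) (b : nat -> bool) lo hi :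
  (forall i, (lo <= i < hi)%N -> b i = c) ->
  \sum_(lo <= i < hi) f i * (b i)%:R = c%:R * \sum_(lo <= i < hi) f i.
Proof.
by move=> bc; rewrite mulr_sumr; apply: eq_big_nat => i /bc ->; rewrite mulrC.
Qed.

Lemma big_nat_block (F : nat -> R) p a :
  \sum_(0 <= i < p + a + 1) F i = \sum_(i < p) F i + \sum_(p <= i < p + a) F i + F (p + a)%N.
Proof.
by rewrite addn1 big_nat_recr //= (big_cat_nat _ (n := p)) ?leq_addr // big_mkord.
Qed.

Lemma cramer2_eq0 (a b c d u w : R) :
  a * u + b * w = 0 -> c * u + d * w = 0 -> a * d - b * c != 0 -> u = 0 /\ w = 0.
Proof.
move=> eq1 eq2 det_neq0.
have det_u : (a * d - b * c) * u = d * (a * u + b * w) - b * (c * u + d * w) by ring.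
have det_w : (a * d - b * c) * w = a * (c * u + d * w) - c * (a * u + b * w) by ring.
rewrite eq1 eq2 !mulr0 subr0 in det_u det_w.
by split; apply: (mulfI det_neq0); rewrite mulr0.
Qed.

Definition L_factor (a x : R) : R :=
  x ^+ 6 - (2 * a + 6) * x ^+ 4 + (5 * a + 8) * x ^+ 2 - 2 * (a + 1) * x - (a + 1).

(* The eigen-equations of L_m on the quotient: V0..V4 on the 5-cycle, Vp on the
   pendant vertex and S the sum over the a twins of u2. *)
Lemma L_quotient_eq0 (a x V0 V1 V2 V3 V4 Vp S : R) : x != 0 -> L_factor a x != 0 ->
  x * V0 = V1 + V4 + Vp + S -> x * V1 = V0 + V2 -> x * V2 = V1 + V3 + S ->
  x * V3 = V2 + V4 -> x * V4 = V3 + V0 -> x * Vp = V0 -> x * S = a * (V0 + V2) ->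
  V0 = 0 /\ V1 = 0 /\ V2 = 0 /\ V3 = 0 /\ V4 = 0 /\ Vp = 0.
Proof.
move=> x_neq0 La_neq0 e0 e1 e2 e3 e4 ep eS.
have xV3 : x * V3 = x ^+ 2 * V2 - (a + 1) * (V0 + V2).
  by have := congr1 ( *%R x) e2; rewrite !mulrDr e1 eS; lra.
have xV4 : x * V4 = (x ^+ 2 - 1) * V0 - (a + 1) * (V0 + V2).
  by have := congr1 ( *%R x) e0; rewrite !mulrDr e1 ep eS; lra.
have eq1 : (a + 2 - (a + 1) * x - x ^+ 2) * V0 + (x ^+ 3 - (a + 2) * x + a + 1) * V2 = 0.
  by have := congr1 ( *%R x) e3; rewrite mulrDr xV3 xV4; lra.
have eq2 : (x ^+ 3 - (a + 3) * x + a + 1) * V0 + (a + 1 - (a + 1) * x - x ^+ 2) * V2 = 0.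
  by have := congr1 ( *%R x) e4; rewrite mulrDr xV3 xV4; lra.
have [V0_0 V2_0] : V0 = 0 /\ V2 = 0.
  apply: (cramer2_eq0 eq1 eq2); rewrite (_ : _ - _ = - L_factor a x) ?oppr_eq0 //.
  by rewrite /L_factor; ring.
have x_inj := mulfI x_neq0.
have V1_0 : V1 = 0 by apply: x_inj; rewrite e1 V0_0 V2_0; ring.
have Vp_0 : Vp = 0 by apply: x_inj; rewrite ep V0_0; ring.
have V3_0 : V3 = 0 by apply: x_inj; rewrite xV3 V0_0 V2_0; ring.
have V4_0 : V4 = 0 by apply: x_inj; rewrite xV4 V0_0 V2_0; ring.
by [].
Qed.

(* Splits the neighbourhood sum at a vertex into the first vertices, the block
   of twins and the last vertex, and decides every adjacency test by lia. *)
Ltac adj_sum edge_unfold :=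
  rewrite big_nat_block !big_ord_recr big_ord0 /=;
  first [ rewrite (sum_mul_indicator (c := true)); last by move=> ? ?; edge_unfold; lia
        | rewrite (sum_mul_indicator (c := false)); last by move=> ? ?; edge_unfold; lia ];
  repeat match goal with |- context [nat_of_bool ?b] =>
    first [ have -> : b = true by edge_unfold; lia
          | have -> : b = false by edge_unfold; lia ] end;
  rewrite /=.

Ltac L_sum m_a := adj_sum ltac:(rewrite /L_edge /= m_a); ring.

Lemma L_eigenvalue_factor m a x : (m - 6)./2 = a -> x != 0 ->
  eigenvalue (L_mx R m) x -> L_factor a%:R x = 0.
Proof.
move=> m_a x_neq0 /eigenvalueP[v v_eigen]; apply: contraNeq => La_neq0.
have n_a : L_order m = (5 + a + 1)%N by rewrite /L_order m_a addn1 addnC.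
set V := rnth v; set T := \sum_(5 <= i < 5 + a) V i.
have E j : (j < 5 + a + 1)%N ->
    \sum_(0 <= i < 5 + a + 1) V i * (L_edge m i j || L_edge m j i)%:R = x * V j.
  by rewrite -n_a; exact: eigen_adj_sum.
have e0 : x * V 0%N = V 1%N + V 4%N + V (5 + a)%N + T by rewrite /T -E; [L_sum m_a | lia].
have e1 : x * V 1%N = V 0%N + V 2%N by rewrite -E; [L_sum m_a | lia].
have e2 : x * V 2%N = V 1%N + V 3%N + T by rewrite /T -E; [L_sum m_a | lia].
have e3 : x * V 3%N = V 2%N + V 4%N by rewrite -E; [L_sum m_a | lia].
have e4 : x * V 4%N = V 3%N + V 0%N by rewrite -E; [L_sum m_a | lia].
have ep : x * V (5 + a)%N = V 0%N by rewrite -E; [L_sum m_a | lia].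
have eI j : (5 <= j < 5 + a)%N -> x * V j = V 0%N + V 2%N.
  by move=> j_I; rewrite -E; [L_sum m_a | lia].
have eT : x * T = a%:R * (V 0%N + V 2%N).
  by rewrite mulr_sumr (eq_big_nat _ _ eI) sumr_const_nat addKn mulr_natl.
have [V0_0 [V1_0 [V2_0 [V3_0 [V4_0 Vp_0]]]]] :=
  L_quotient_eq0 x_neq0 La_neq0 e0 e1 e2 e3 e4 ep eT.
apply/eqP/rnth_eq0 => j; rewrite [in (j < _)%N]n_a => lt_jn.
have [->|[->|[->|[->|[->|[->|j_I]]]]]] : (j = 0 \/ j = 1 \/ j = 2 \/ j = 3 \/ j = 4 \/
    j = 5 + a \/ 5 <= j < 5 + a)%N by lia.
1-6: done.
by apply: (mulfI x_neq0); rewrite eI // V0_0 V2_0; ring.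
Qed.

Definition Y_factor (k x : R) : R := (x ^+ 2 - x - 1) * (x ^+ 2 - k) - 2 * k * x * (x - 1).

Ltac Y_sum m_k := adj_sum ltac:(rewrite /Y_edge /= m_k).

Lemma Y_factor_eigenvalue (m k : nat) (mu : R) : ((m - 3) %/ 3)%N = k -> 1 < mu ->
  Y_factor k%:R mu = 0 -> eigenvalue (Y_mx R m) mu.
Proof.
move=> m_k mu_gt1 Yk_mu; set K : R := k%:R in Yk_mu *.
have mu_gt0 : 0 < mu := lt_trans ltr01 mu_gt1.
have mu1_neq0 : mu - 1 != 0 by rewrite subr_eq0 gt_eqF.
have muK_neq0 : mu ^+ 2 - K != 0.
  apply/eqP => /eqP; rewrite subr_eq0 => /eqP K_mu; move/eqP: Yk_mu; apply/negP.
  rewrite /Y_factor -K_mu subrr mulr0 sub0r oppr_eq0; apply/lt0r_neq0.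
  by rewrite !mulr_gt0 ?exprn_gt0 ?subr_gt0.
(* Eigenvector: 1 on u2 and u5, q on u3 and u4, tau on I and w on the apex;
   the eigen-equations at u3, I and the apex determine q, tau and w, and the
   one at u2 is the condition Y_factor k mu = 0. *)
pose q := (mu - 1)^-1; pose tau := 2 * mu / (mu ^+ 2 - K); pose w := 2 * K / (mu ^+ 2 - K).
have eq_u2 : q + K * tau = mu.
  have : q + K * tau - mu = - Y_factor K mu / ((mu - 1) * (mu ^+ 2 - K)).
    by rewrite /Y_factor /q /tau; field; exact/andP.
  by rewrite Yk_mu oppr0 mul0r => /eqP; rewrite subr_eq0 => /eqP.
have eq_u3 : 1 + q = mu * q by rewrite /q; field.
have eq_I : 1 + 1 + w = mu * tau by rewrite /w /tau; field.
have eq_top : K * tau = mu * w by rewrite /w /tau; field.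
pose yv i : R := if (i <= 3)%N then (if (i == 0)%N || (i == 3)%N then 1 else q)
                 else if (i == 4 + k)%N then w else tau.
have yv_I i : (4 <= i < 4 + k)%N -> yv i = tau.
  by move=> i_I; rewrite /yv !ifF //; lia.
have yv_top : yv (4 + k)%N = w by rewrite /yv /= eqxx.
have n_k : Y_order m = (4 + k + 1)%N by rewrite /Y_order m_k addnC addn1.
apply/eigenvalueP; exists (\row_(j < Y_order m) yv j); last first.
  have n_gt0 : (0 < Y_order m)%N by rewrite n_k addn1.
  by apply/eqP => /rowP/(_ (Ordinal n_gt0)); rewrite !mxE /yv /= => /eqP; rewrite oner_eq0.
apply: row_eigen_adj => j; rewrite n_k => lt_jn.
have [->|[->|[->|[->|[->|j_I]]]]] : (j = 0 \/ j = 1 \/ j = 2 \/ j = 3 \/ j = 4 + k \/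
    4 <= j < 4 + k)%N by lia.
6: rewrite (yv_I _ j_I).
all: Y_sum m_k; rewrite (eq_big_nat _ _ yv_I) sumr_const_nat addKn -[tau *+ k]mulr_natl yv_top /yv /=.
all: lra.
Qed.

Lemma Y_factor_lt0_of_L_root (s x : R) : 1 < s -> 3 <= x ->
  L_factor (3 * s - 3) x = 0 -> Y_factor (2 * s - 1) x < 0.
Proof.
move=> s_gt1 x_ge3.
have -> : L_factor (3 * s - 3) x =
    (x ^+ 2 + x - 1) * Y_factor (2 * s - 1) x + (s - 1) * (x ^+ 2 - 2 * x - 1).
  by rewrite /L_factor /Y_factor; ring.
have : 0 < (s - 1) * (x ^+ 2 - 2 * x - 1) by apply: mulr_gt0; nra.
have x_pos : 0 < x ^+ 2 + x - 1 by nra.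
by rewrite -(pmulr_rlt0 _ x_pos); lra.
Qed.

Lemma Y_factor_lt0_at3 (k : R) : 3 <= k -> Y_factor k 3 < 0.
Proof. by rewrite /Y_factor; lra. Qed.

Lemma Y_factor_gt0 (k x : R) : 0 <= k -> 3 <= x -> 4 * k < x ^+ 2 -> 0 < Y_factor k x.
Proof.
move=> k_ge0 x_ge3 x2_gt.
have -> : Y_factor k x = (x ^+ 2 - x - 1) * (x ^+ 2 - 4 * k) + k * (x ^+ 2 - x - 3).
  by rewrite /Y_factor; ring.
by rewrite ltr_wpDr ?mulr_ge0 ?mulr_gt0 ?subr_gt0 //; nra.
Qed.

Lemma Y_factor_root_gt (k y : R) : 0 <= k -> 3 <= y -> Y_factor k y < 0 ->
  exists2 mu, y < mu & Y_factor k mu = 0.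
Proof.
move=> k_ge0 y_ge3 Yk_y.
pose p : {poly R} := ('X^2 - 'X - 1) * ('X^2 - k%:P) - (2 * k)%:P * 'X * ('X - 1).
have pE z : p.[z] = Y_factor k z by rewrite /p /Y_factor !hornerE.
have y_le : y <= y + 4 * k by rewrite lerDl mulr_ge0.
have p_sign : p.[y] * p.[y + 4 * k] < 0 by rewrite !pE nmulr_rlt0 // Y_factor_gt0 //; nra.
have [mu] := poly_ivtoo y_le p_sign.
by rewrite in_itv /= /root pE => /andP[y_lt_mu _] /eqP; exists mu.
Qed.

End Spectrum.

Theorem lemma2p2 (R : rcfType) (m t : nat) :
  (38 <= m)%N -> ~~ odd m -> (0 < t)%N -> m = (3 * t)%N ->
  lambda (L_mx R m) < lambda (Y_mx R m).
Proof.
move=> m_ge38 m_even _ m_3t; pose s := (m %/ 6)%N.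
have m_a : (m - 6)./2 = (3 * s - 3)%N by lia.
have m_k : ((m - 3) %/ 3)%N = (2 * s - 1)%N by lia.
have a_R : (3 * s - 3)%N%:R = 3 * s%:R - 3 :> R by rewrite natrB ?natrM //; lia.
have k_R : (2 * s - 1)%N%:R = 2 * s%:R - 1 :> R by rewrite natrB ?natrM //; lia.
have s_ge7 : 7 <= s%:R :> R by rewrite ler_nat; lia.
set lamL := lambda (L_mx R m); pose x1 := Num.max lamL 3.
have x1_ge3 : 3 <= x1 by rewrite le_max lexx orbT.
have Y_x1 : Y_factor (2 * s%:R - 1) x1 < 0.
  have [lamL_ge3 | lamL_lt3] := leP 3 lamL; last first.
    by rewrite /x1 max_r ?ltW // Y_factor_lt0_at3 //; lra.
  have lamL_neq0 : lamL != 0 by rewrite gt_eqF // (lt_le_trans _ lamL_ge3).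
  rewrite /x1 max_l // Y_factor_lt0_of_L_root //; first lra.
  rewrite -a_R; apply: (L_eigenvalue_factor m_a lamL_neq0).
  by rewrite eigenvalue_root_char lambda_root.
have k_ge0 : 0 <= 2 * s%:R - 1 :> R by lra.
have [mu x1_lt_mu Y_mu] := Y_factor_root_gt k_ge0 x1_ge3 Y_x1.
have Y_root : root (char_poly (Y_mx R m)) mu.
  by rewrite -eigenvalue_root_char (Y_factor_eigenvalue m_k) ?k_R //; lra.
have := root_le_lambda Y_root.
have : lamL <= x1 by rewrite le_max lexx.
lra.
Qed.
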